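(* There is a constant $C$ such that for every complex $M\times N$ matrix $A=(a_{jk})$, $$h(A)\le C\sup_{1\le j\le M}\sum_{k=0}^N|a_{jk}-a_{j,k+1}|,$$ where one sets $a_{j0}=a_{j,N+1}=0$ for all $1\le j\le M$.
   Context: Let $(\Omega,\Sigma,\mathbb P)$ be a probability space with a dyadic filtration $(\Sigma_k)_{k\ge0}$ (increasing sub-$\sigma$-algebras, each $\Sigma_k$ atomic with exactly $2^k$ atoms of probability $2^{-k}$); $\mathcal E_kf=\mathbb E(f\mid\Sigma_k)$, $\Delta_kf=\mathcal E_kf-\mathcal E_{k-1}f$ ($k\ge1$). For a complex $M\times N$ matrix $A=(a_{jk})$, $h(A)$ is the least constant such that $\big\|\max_{1\le j\le M}|\sum_{k=1}^N a_{jk}\Delta_kf|\big\|_{L_2}\le h(A)\|f\|_{L_2}$ for all $f\in L_2(\Omega)$; it does not depend on the choice of probability space and dyadic filtration. *)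

From mathcomp Require Import all_boot all_order all_algebra.
From mathcomp Require Import reals complex.
Set Implicit Arguments. Unset Strict Implicit. Unset Printing Implicit Defensive.
Import Order.TTheory GRing.Theory Num.Theory.
Local Open Scope ring_scope.

Section Dyadic.
Variable R : realType.
Local Notation C := R[i].

(* Model of the dyadic filtration: Omega = {0,..,2^n-1} with uniform probability
   2^-n; for k <= n, Sigma_k is generated by the 2^k blocks
   {i | i %/ 2^(n-k) = c}, each of probability 2^-k. *)

Definition condexp (n k : nat) (f : 'I_(2 ^ n) -> C) (i : 'I_(2 ^ n)) : C :=
  ((2 ^ (n - k))%N%:R)^-1 *
  \sum_(i' : 'I_(2 ^ n) | (i' %/ 2 ^ (n - k) == i %/ 2 ^ (n - k))%N) f i'.

Definition mdiff (n k : nat) (f : 'I_(2 ^ n) -> C) (i : 'I_(2 ^ n)) : C :=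
  @condexp n k f i - @condexp n k.-1 f i.

Definition l2norm (n : nat) (g : 'I_(2 ^ n) -> R) : R :=
  Num.sqrt (((2 ^ n)%N%:R)^-1 * \sum_(i : 'I_(2 ^ n)) g i ^+ 2).

Definition cabs (z : C) : R := Normc.normc z.

(* omega |-> max_{1<=j<=M} | sum_{k=1}^N a_{jk} Delta_k f (omega) |;
   column index k' : 'I_N stands for k = k'+1 *)
Definition maxfun (n M N : nat) (A : 'M[C]_(M, N)) (f : 'I_(2 ^ n) -> C)
    (i : 'I_(2 ^ n)) : R :=
  \big[Num.max/0]_(j < M) cabs (\sum_(k < N) A j k * @mdiff n k.+1 f i).

(* a_{jk} for k in nat, with a_{j0} = a_{j,N+1} = 0 (and 0 beyond) *)
Definition aext (M N : nat) (A : 'M[C]_(M, N)) (j : 'I_M) (k : nat) : C :=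
  if (0 < k)%N then
    (if (insub k.-1 : option 'I_N) is Some kk then A j kk else 0)
  else 0.

Definition rowvar (M N : nat) (A : 'M[C]_(M, N)) : R :=
  \big[Num.max/0]_(j < M) \sum_(k < N.+1) cabs (aext A j k - aext A j k.+1).

End Dyadic.

From mathcomp Require Import all_boot all_order all_algebra.
From mathcomp Require Import reals complex.
From mathcomp Require Import ring lra.
Import Order.TTheory GRing.Theory Num.Theory.
Local Open Scope ring_scope.

(* Summation by parts turns [sum_k a_jk Delta_k f] into
   [sum_(k=0..N) (a_jk - a_j(k+1)) E_k f], so the maximal function is bounded
   pointwise by [rowvar A] times [max_(k<=N) E_k |f|].  Doob's L2 maximal
   inequality for the martingale [E_k |f|] then gives the theorem with C = 2. *)

Section DyadicConditionalExpectation.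
Context {R : realFieldType} {n : nat}.
Local Notation Omega := 'I_(2 ^ n).

Definition atom_size (k : nat) : nat := 2 ^ (n - k).

Definition condexpR (k : nat) (g : Omega -> R) (i : Omega) : R :=
  (atom_size k)%:R^-1 *
  \sum_(i' : Omega | (i' %/ atom_size k == i %/ atom_size k)%N) g i'.

Definition atom_const (k : nat) (phi : Omega -> R) : Prop :=
  forall i i' : Omega, (i %/ atom_size k = i' %/ atom_size k)%N -> phi i = phi i'.

Lemma atom_size_gt0 k : (0 < atom_size k)%N.
Proof. by rewrite expn_gt0. Qed.

Lemma expn_atom_size k : (k <= n)%N -> (2 ^ n = 2 ^ k * atom_size k)%N.
Proof. by move=> kn; rewrite -expnD subnKC. Qed.

Lemma atom_size_split j k : (j <= k)%N -> (k <= n)%N ->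
  (atom_size j = atom_size k * 2 ^ (k - j))%N.
Proof. by move=> jk kn; rewrite /atom_size -expnD addnBA // subnK. Qed.

Lemma atom_mass k c : (k <= n)%N -> (c < 2 ^ k)%N ->
  \sum_(i : Omega | (i %/ atom_size k == c)%N) (1 : R) = (atom_size k)%:R.
Proof.
move=> kn ck; set d := atom_size k; have d_gt0 : (0 < d)%N := atom_size_gt0 k.
pose F j : R := if (j %/ d == c)%N then 1 else 0.
rewrite big_mkcond /= -(big_mkord xpredT F) (expn_atom_size k kn) big_nat_mul.
have block q : \sum_(q * d <= j < q.+1 * d) F j = (q == c)%:R * d%:R.
  rewrite (eq_big_nat _ _ (F2 := fun=> (q == c)%:R)) => [|j /andP[qj jq]].
    by rewrite sumr_const_nat -mulnBl subSnn mul1n mulr_natr.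
  rewrite /F; have -> : (j %/ d = q)%N; last by case: (q == c).
  by apply/eqP; rewrite eqn_leq -ltnS ltn_divLR // leq_divRL // jq qj.
rewrite big_mkord (bigD1 (Ordinal ck)) //= block eqxx mul1r big1 ?addr0 // => q.
by rewrite -val_eqE /= block => /negbTE ->; rewrite mul0r.
Qed.

Lemma condexpR_atom_const k h : atom_const k (condexpR k h).
Proof. by move=> i i' e; rewrite /condexpR e. Qed.

Lemma atom_const_mono j k phi : (j <= k)%N -> (k <= n)%N ->
  atom_const j phi -> atom_const k phi.
Proof.
move=> jk kn phi_j i i' e; apply: phi_j.
by rewrite (atom_size_split j k jk kn) !divnMA e.
Qed.

Lemma atom_const_max k phi psi : atom_const k phi -> atom_const k psi ->
  atom_const k (fun i => Num.max (phi i) (psi i)).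
Proof. by move=> phi_k psi_k i i' e; rewrite (phi_k i i' e) (psi_k i i' e). Qed.

Lemma condexpR_ge0 k h i : (forall w, 0 <= h w) -> 0 <= condexpR k h i.
Proof. by move=> h_ge0; rewrite mulr_ge0 ?invr_ge0 ?ler0n ?sumr_ge0. Qed.

Lemma sum_mul_condexpR k (phi h : Omega -> R) : (k <= n)%N -> atom_const k phi ->
  \sum_(i : Omega) phi i * condexpR k h i = \sum_(i : Omega) phi i * h i.
Proof.
move=> kn phi_k; set d := atom_size k.
have d_neq0 : d%:R != 0 :> R by rewrite pnatr_eq0 -lt0n atom_size_gt0.
transitivity (d%:R^-1 * \sum_(i : Omega)
                \sum_(i' : Omega | (i' %/ d == i %/ d)%N) phi i' * h i').
  rewrite mulr_sumr; apply: eq_bigr => i _; rewrite mulrCA mulr_sumr.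
  by congr (_ * _); apply: eq_bigr => i' /eqP e; rewrite (phi_k i i').
rewrite (exchange_big_dep xpredT) //= mulr_sumr; apply: eq_bigr => i' _.
rewrite (eq_bigl (fun i : Omega => (i %/ d == i' %/ d)%N)) => [|i]; last first.
  by rewrite eq_sym.
have i'_atom : (i' %/ d < 2 ^ k)%N.
  by rewrite ltn_divLR ?atom_size_gt0 // -(expn_atom_size k kn).
rewrite (eq_bigr (fun=> phi i' * h i' * 1)) => [|i _]; last by rewrite mulr1.
by rewrite -mulr_sumr (atom_mass k _ kn i'_atom) mulrCA mulVf ?mulr1.
Qed.

Lemma sum_sqr_condexpR_le k g : (k <= n)%N ->
  \sum_(i : Omega) condexpR k g i ^+ 2 <= \sum_(i : Omega) g i ^+ 2.
Proof.
move=> kn; set X := condexpR k g.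
have XX_Xg : \sum_(i : Omega) X i ^+ 2 = \sum_(i : Omega) X i * g i.
  rewrite -(sum_mul_condexpR k X g kn (condexpR_atom_const k g)).
  by apply: eq_bigr => i _; rewrite expr2.
have : \sum_(i : Omega) X i * g i <= \sum_(i : Omega) (X i ^+ 2 + g i ^+ 2) / 2.
  by apply: ler_sum => i _; have := sqr_ge0 (X i - g i); nra.
rewrite -mulr_suml big_split /= -XX_Xg; lra.
Qed.

End DyadicConditionalExpectation.

Section DoobMaximalInequality.
Context {R : realFieldType} {n : nat}.
Variable g : 'I_(2 ^ n) -> R.
Local Notation X k := (condexpR k g).

Fixpoint runmax (k : nat) (i : 'I_(2 ^ n)) : R :=
  if k is k'.+1 then Num.max (runmax k' i) (X k'.+1 i) else X 0 i.

Definition mtransform (N : nat) (i : 'I_(2 ^ n)) : R :=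
  \sum_(k < N) runmax k i * (X k.+1 i - X k i).

Lemma runmax_atom_const k : (k <= n)%N -> atom_const k (runmax k).
Proof.
elim: k => [|k IH] kn /=; first exact: condexpR_atom_const.
apply: atom_const_max; last exact: condexpR_atom_const.
exact: atom_const_mono (leqnSn k) kn (IH (ltnW kn)).
Qed.

Lemma condexpR_le_runmax k N i : (k <= N)%N -> X k i <= runmax N i.
Proof.
elim: N => [|N IH]; first by rewrite leqn0 => /eqP ->.
rewrite leq_eqVlt ltnS => /orP[/eqP -> | /IH kN] /=.
  by rewrite le_max lexx orbT.
by rewrite le_max kN.
Qed.

Lemma runmax_ge0 N i : (forall w, 0 <= g w) -> 0 <= runmax N i.
Proof.
move=> g_ge0.
exact: le_trans (condexpR_ge0 0 g i g_ge0) (condexpR_le_runmax 0 N i (leq0n N)).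
Qed.

(* Pathwise Doob inequality (no sign condition on [g] is needed): when the
   running maximum jumps from [a] to [b], the step reduces to [(a - b)^2 >= 0]. *)
Lemma runmax_pathwise N i :
  mtransform N i + runmax N i ^+ 2 / 2 <= runmax N i * X N i.
Proof.
elim: N => [|N IH]; first by rewrite /mtransform big_ord0 /=; nra.
rewrite /mtransform big_ord_recr /= -/(mtransform N i).
move: IH; set a := runmax N i; set b := X N.+1 i; set x := X N i.
by case: (lerP a b) => ab; nra.
Qed.

(* [runmax k] is Sigma_k-measurable, so each increment of the martingale
   transform has mean zero. *)
Lemma sum_mtransform N : (N <= n)%N -> \sum_(i : 'I_(2 ^ n)) mtransform N i = 0.
Proof.
move=> Nn; rewrite exchange_big big1 // => k _.
have kn : (k.+1 <= n)%N := leq_trans (ltn_ord k) Nn.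
have runmax_k := runmax_atom_const k (ltnW kn).
under eq_bigr do rewrite mulrBr.
rewrite sumrB (sum_mul_condexpR k.+1) //; last first.
  exact: atom_const_mono (leqnSn k) kn runmax_k.
by rewrite (sum_mul_condexpR k) ?subrr // ltnW.
Qed.

Lemma doob_sum_sqr_runmax N : (N <= n)%N ->
  \sum_(i : 'I_(2 ^ n)) runmax N i ^+ 2 <= 4 * \sum_(i : 'I_(2 ^ n)) g i ^+ 2.
Proof.
move=> Nn.
have : \sum_(i : 'I_(2 ^ n)) runmax N i ^+ 2 <=
       \sum_(i : 'I_(2 ^ n)) (4 * X N i ^+ 2 - 4 * mtransform N i).
  apply: ler_sum => i _; have := runmax_pathwise N i.
  by have := sqr_ge0 (runmax N i - 2 * X N i); nra.
rewrite sumrB -!mulr_sumr sum_mtransform // mulr0 subr0 => /le_trans; apply.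
by rewrite ler_pM2l ?sum_sqr_condexpR_le.
Qed.

End DoobMaximalInequality.

Lemma abel_summation {V : comPzRingType} (a e : nat -> V) N :
  \sum_(k < N.+1) (a k - a k.+1) * e k =
  \sum_(k < N) a k.+1 * (e k.+1 - e k) + a 0%N * e 0%N - a N.+1 * e N.
Proof.
elim: N => [|N IH]; first by rewrite big_ord1 big_ord0 add0r mulrBl.
rewrite big_ord_recr /= IH big_ord_recr /=; ring.
Qed.

Section ComplexModulus.
Context {R : realType}.

(* [cabs] is the norm of the normed Z-module [Rcomplex R], a copy of [R[i]]. *)
Lemma cabs_ge0 (z : R[i]) : 0 <= cabs z.
Proof. exact: (@normr_ge0 _ (Rcomplex R)). Qed.

Lemma cabs_sum {I : Type} (r : seq I) (P : pred I) (F : I -> R[i]) :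
  cabs (\sum_(j <- r | P j) F j) <= \sum_(j <- r | P j) cabs (F j).
Proof. exact: (@ler_norm_sum _ (Rcomplex R)). Qed.

Lemma cabsM (x y : R[i]) : cabs (x * y) = cabs x * cabs y.
Proof. exact: Normc.normcM. Qed.

Lemma cabs_invn (d : nat) : cabs (d%:R^-1 : R[i]) = d%:R^-1.
Proof. by rewrite /cabs Normc.normcV (normcMn 1 d) Normc.normc1. Qed.

Lemma cabs_condexp n k (f : 'I_(2 ^ n) -> R[i]) i :
  cabs (condexp k f i) <= condexpR k (fun w => cabs (f w)) i.
Proof.
rewrite /condexp /condexpR cabsM cabs_invn.
by apply: ler_wpM2l; [rewrite invr_ge0 ler0n | exact: cabs_sum].
Qed.

End ComplexModulus.

Lemma l2norm_le_scale {R : realType} n (u v : 'I_(2 ^ n) -> R) (c : R) : 0 <= c ->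
  \sum_(i : 'I_(2 ^ n)) u i ^+ 2 <= c ^+ 2 * \sum_(i : 'I_(2 ^ n)) v i ^+ 2 ->
  l2norm u <= c * l2norm v.
Proof.
move=> c_ge0 uv; rewrite /l2norm -[c]ger0_norm // -sqrtr_sqr -sqrtrM ?sqr_ge0 //.
by rewrite ler_wsqrtr // mulrCA ler_wpM2l // invr_ge0 ler0n.
Qed.

Section MaximalFunction.
Context {R : realType} {M N : nat}.
Variable A : 'M[R[i]]_(M, N).

Lemma aext_last j : aext A j N.+1 = 0.
Proof. by rewrite /aext /=; case: insubP => // k; rewrite ltnn. Qed.

Lemma aextS j (k : 'I_N) : aext A j k.+1 = A j k.
Proof.
rewrite /aext /=; case: insubP => [k' _ /val_inj -> // |].
by rewrite ltn_ord.
Qed.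

Lemma rowvar_ge0 : 0 <= rowvar A.
Proof. exact: bigmax_ge_id. Qed.

Lemma maxfun_ge0 n (f : 'I_(2 ^ n) -> R[i]) i : 0 <= maxfun A f i.
Proof. exact: bigmax_ge_id. Qed.

Lemma sum_mdiff_by_parts n (f : 'I_(2 ^ n) -> R[i]) j i :
  \sum_(k < N) A j k * mdiff k.+1 f i =
  \sum_(k < N.+1) (aext A j k - aext A j k.+1) * condexp k f i.
Proof.
rewrite (abel_summation (aext A j) (fun k => condexp k f i)) aext_last.
rewrite [aext A j 0]/aext !mul0r addr0 subr0.
by apply: eq_bigr => k _; rewrite aextS.
Qed.

Lemma cabs_sum_mdiff_le n (f : 'I_(2 ^ n) -> R[i]) j i :
  cabs (\sum_(k < N) A j k * mdiff k.+1 f i) <=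
  (\sum_(k < N.+1) cabs (aext A j k - aext A j k.+1)) *
  runmax (fun w => cabs (f w)) N i.
Proof.
rewrite sum_mdiff_by_parts mulr_suml; apply: le_trans (cabs_sum _ _ _) _.
apply: ler_sum => k _; rewrite cabsM ler_wpM2l ?cabs_ge0 //.
apply: le_trans (cabs_condexp _ _ _ _) _.
by apply: condexpR_le_runmax; rewrite -ltnS.
Qed.

Lemma maxfun_le_runmax n (f : 'I_(2 ^ n) -> R[i]) i :
  maxfun A f i <= rowvar A * runmax (fun w => cabs (f w)) N i.
Proof.
have runmax_f_ge0 := runmax_ge0 _ N i (fun w => cabs_ge0 (f w)).
apply: bigmax_le => [|j _]; first by rewrite mulr_ge0 ?rowvar_ge0.
apply: le_trans (cabs_sum_mdiff_le _ f j i) _; rewrite ler_wpM2r //.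
exact: le_bigmax (fun j => \sum_(k < N.+1) cabs (aext A j k - aext A j k.+1)) j.
Qed.

End MaximalFunction.

Theorem proposition3p1 (R : realType) :
  exists Cst : R,
    forall (M N n : nat) (A : 'M[R[i]]_(M, N)) (f : 'I_(2 ^ n) -> R[i]),
      (N <= n)%N ->
      l2norm (maxfun A f) <= Cst * rowvar A * l2norm (fun w => cabs (f w)).
Proof.
exists 2 => M N n A f Nn; set g := fun w => cabs (f w).
apply: l2norm_le_scale; first by rewrite mulr_ge0 ?rowvar_ge0.
have pointwise i : maxfun A f i ^+ 2 <= rowvar A ^+ 2 * runmax g N i ^+ 2.
  rewrite -exprMn ler_sqr ?nnegrE ?maxfun_le_runmax ?maxfun_ge0 //.
  by rewrite mulr_ge0 ?rowvar_ge0 ?runmax_ge0 // => w; apply: cabs_ge0.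
apply: le_trans (ler_sum _ (fun i _ => pointwise i)) _.
rewrite -mulr_sumr.
apply: le_trans (ler_wpM2l (sqr_ge0 _) (doob_sum_sqr_runmax g N Nn)) _.
by rewrite exprMn; lra.
Qed.
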